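(* For every graph $G$, $\operatorname{box}(G)\le 2\,MED(G)+2$.
   Context: A dominating edge set of $G$ is a set $D$ of edges such that every edge of $G$ not in $D$ shares an endpoint with some edge of $D$; $MED(G)$ is the minimum cardinality of a dominating edge set. The boxicity $\operatorname{box}(G)$ is the minimum $b$ such that $G$ is the intersection graph of axis-parallel boxes in $\mathbb{R}^b$ (products of $b$ closed intervals), one box per vertex. *)

From Stdlib Require Import Reals.
From mathcomp Require Import all_boot.

Set Implicit Arguments.
Unset Strict Implicit.
Unset Printing Implicit Defensive.

(* A finite simple graph: vertex set T (a finType), adjacency e : rel T,
   assumed symmetric and irreflexive in the theorem. *)

Definition is_edge (T : finType) (e : rel T) (d : {set T}) : bool :=
  [exists x, exists y, e x y && (d == [set x; y])].

Definition dominating_edge_set (T : finType) (e : rel T) (D : {set {set T}}) : Prop :=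
  (forall d, d \in D -> is_edge e d) /\
  (forall d, is_edge e d -> d \notin D ->
     exists2 d', d' \in D & d :&: d' != set0).

Definition is_MED (T : finType) (e : rel T) (m : nat) : Prop :=
  (exists D, dominating_edge_set e D /\ #|D| = m) /\
  (forall D, dominating_edge_set e D -> m <= #|D|).

(* A box representation of G in R^b: vertex v gets the box
   prod_{i<b} [lo v i, hi v i] (closed, nonempty intervals), and two
   distinct vertices are adjacent iff their boxes intersect. *)
Definition box_representation (T : finType) (e : rel T) (b : nat)
  (lo hi : T -> 'I_b -> R) : Prop :=
  (forall v i, Rle (lo v i) (hi v i)) /\
  (forall x y, x != y ->
     (e x y <-> forall i, Rle (lo x i) (hi y i) /\ Rle (lo y i) (hi x i))).

Definition box_representable (T : finType) (e : rel T) (b : nat) : Prop :=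
  exists lo hi, @box_representation T e b lo hi.

Definition is_boxicity (T : finType) (e : rel T) (k : nat) : Prop :=
  box_representable e k /\ (forall b, box_representable e b -> k <= b).

(** The vertices [V(D)] of a dominating edge set [D] form a vertex cover of
    size at most [2 |D|], and a graph with a vertex cover [S] has boxicity at
    most [|S| + 1]: each [s] in [S] gets a coordinate in which [s] is the
    point [0], its neighbours are [[0, 1]] and all other vertices the point
    [1]; one more coordinate gives [[0, |V|]] to the vertices of [S] and
    distinct points to the vertices of the independent set [V - S]. *)

From Stdlib Require Import Reals Lra.
From mathcomp Require Import all_boot.

Set Implicit Arguments.
Unset Strict Implicit.
Unset Printing Implicit Defensive.

Definition intervals_meet (lx hx ly hy : R) : Prop := Rle lx hy /\ Rle ly hx.

Definition vertex_cover (T : finType) (e : rel T) (S : {set T}) : Prop :=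
  forall x y, e x y -> (x \in S) || (y \in S).

Section DominatingEdgeSets.

Variables (T : finType) (e : rel T).

Lemma is_edge_set2 x y : e x y -> is_edge e [set x; y].
Proof.
by move=> exy; apply/existsP; exists x; apply/existsP; exists y; rewrite exy eqxx.
Qed.

Lemma card_edge d : is_edge e d -> #|d| <= 2.
Proof.
by case/existsP=> x /existsP[y /andP[_ /eqP->]]; rewrite cards2; case: (x != y).
Qed.

Lemma dominating_edge_set_cover (D : {set {set T}}) :
  dominating_edge_set e D -> vertex_cover e (cover D).
Proof.
move=> [_ domD] x y exy; have Exy := is_edge_set2 exy.
have [xyD | xyND] := boolP ([set x; y] \in D).
  by apply/orP; left; apply/bigcupP; exists [set x; y]; rewrite ?set21.
have [d dD /set0Pn[z]] := domD _ Exy xyND.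
rewrite in_setI in_set2 => /andP[/orP[] /eqP-> zd]; apply/orP.
  by left; apply/bigcupP; exists d.
by right; apply/bigcupP; exists d.
Qed.

Lemma card_cover_edges (D : {set {set T}}) :
  (forall d, d \in D -> is_edge e d) -> #|cover D| <= 2 * #|D|.
Proof.
move=> edgeD; apply: leq_trans (leq_card_cover D) _.
rewrite mulnC -sum_nat_const; apply: leq_sum => d /edgeD; exact: card_edge.
Qed.

End DominatingEdgeSets.

Lemma box_representable_widen (T : finType) (e : rel T) b b' :
  b <= b' -> box_representable e b -> box_representable e b'.
Proof.
move=> le_bb' [lo [hi [lo_hi repr]]].
pose pad (f : T -> 'I_b -> R) v (i : 'I_b') := oapp (f v) R0 (insub (val i)).
exists (pad lo), (pad hi); split.
  move=> v i; rewrite /pad.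
  by case: insubP => [j _ _ | _] /=; [exact: lo_hi | lra].
move=> x y xy; rewrite repr //; split=> meet i.
  by rewrite /pad; case: insubP => [j _ _ | _] /=; [exact: meet | lra].
by have := meet (widen_ord le_bb' i); rewrite /pad /= valK.
Qed.

Lemma forall_split m n (P : 'I_m + 'I_n -> Prop) :
  (forall i : 'I_(m + n), P (split i)) <-> forall u, P u.
Proof. by split=> [Psplit u | Pu i //]; rewrite -(unsplitK u). Qed.

Lemma INR_enum_rank_bounds (T : finType) (v : T) :
  Rle R0 (INR (enum_rank v)) /\ Rle (INR (enum_rank v)) (INR #|T|).
Proof. by split; [exact: pos_INR | apply/le_INR/leP/ltnW]. Qed.

Section VertexCoverBoxes.

Variables (T : finType) (e : rel T).
Hypothesis e_sym : symmetric e.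
Variable S : {set T}.
Hypothesis coverS : vertex_cover e S.

Definition star_lo (s v : T) : R := if (v == s) || e v s then R0 else R1.
Definition star_hi (s v : T) : R := if v == s then R0 else R1.

Lemma star_intervals_meet s x y : x != y ->
  intervals_meet (star_lo s x) (star_hi s x) (star_lo s y) (star_hi s y) <->
  ((x == s) || (y == s) ==> e x y).
Proof.
move=> xy; rewrite /intervals_meet /star_lo /star_hi.
have [xs | xs] := eqVneq x s; have [ys | ys] := eqVneq y s => /=.
- by rewrite xs ys eqxx in xy.
- rewrite xs [e y s]e_sym.
  by case: (e s y); split=> [[lo_x lo_y] | _] //; try split; lra.
- rewrite ys.
  by case: (e x s); split=> [[lo_x lo_y] | _] //; try split; lra.
- by case: (e x s); case: (e y s); split=> //; lra.
Qed.

Definition index_lo (v : T) : R := if v \in S then R0 else INR (enum_rank v).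
Definition index_hi (v : T) : R :=
  if v \in S then INR #|T| else INR (enum_rank v).

Lemma index_intervals_meet x y : x != y ->
  intervals_meet (index_lo x) (index_hi x) (index_lo y) (index_hi y) <->
  (x \in S) || (y \in S).
Proof.
move=> xy; rewrite /intervals_meet /index_lo /index_hi.
have := INR_enum_rank_bounds x; have := INR_enum_rank_bounds y.
case: (x \in S); case: (y \in S) => /= y_bounds x_bounds; split=> //; try lra.
move=> [le_xy le_yx]; case/eqP: xy; apply/enum_rank_inj/val_inj/INR_eq.
exact: Rle_antisym le_xy le_yx.
Qed.

Definition cover_coord_lo (v : T) (u : 'I_#|S| + 'I_1) : R :=
  if u is inl j then star_lo (enum_val j) v else index_lo v.
Definition cover_coord_hi (v : T) (u : 'I_#|S| + 'I_1) : R :=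
  if u is inl j then star_hi (enum_val j) v else index_hi v.

Lemma cover_box_representation :
  box_representation e (fun v i => cover_coord_lo v (split i))
                       (fun v i => cover_coord_hi v (split i)).
Proof.
split.
  move=> v i; case: (split i) => [j | _] /=.
    by rewrite /star_lo /star_hi; case: (v == _); case: (e v _) => /=; lra.
  rewrite /index_lo /index_hi; have := INR_enum_rank_bounds v.
  by case: (v \in S); lra.
move=> x y xy.
pose meet u := intervals_meet (cover_coord_lo x u) (cover_coord_hi x u)
                              (cover_coord_lo y u) (cover_coord_hi y u).
split=> [exy | /(forall_split meet).1 meet_all].
  apply: (forall_split meet).2 => -[j | k].
    by rewrite /meet /= star_intervals_meet // exy implybT.
  by rewrite /meet /= index_intervals_meet //; exact: coverS.
have := meet_all (inr ord0); rewrite /meet index_intervals_meet //.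
case/orP=> [xS | yS].
  by have := meet_all (inl (enum_rank_in xS x)); rewrite /meet
    star_intervals_meet // enum_rankK_in // eqxx; apply.
by have := meet_all (inl (enum_rank_in yS y)); rewrite /meet
  star_intervals_meet // enum_rankK_in // eqxx orbT; apply.
Qed.

Lemma box_representable_cover : box_representable e (#|S| + 1).
Proof. by eexists; eexists; exact: cover_box_representation. Qed.

End VertexCoverBoxes.

Theorem theorem16 (T : finType) (e : rel T)
  (e_sym : symmetric e) (e_irr : irreflexive e) (k m : nat) :
  is_boxicity e k -> is_MED e m -> k <= 2 * m + 2.
Proof.
move=> [_ box_min] [[D [domD <-]] _]; apply: box_min.
have coverD := dominating_edge_set_cover domD.
apply: box_representable_widen (box_representable_cover e_sym coverD).
by apply: leq_add; first exact: card_cover_edges (proj1 domD).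
Qed.
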